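(* Let $G$ be an edge-colored graph of order $n\ge 1$. If $e(G)+c(G)\geq \binom{n+1}{2}-1$ and $G$ contains no rainbow triangle, then $G$ belongs to $\mathcal{G}_0$.
   Context: An edge-colored graph is a finite simple graph $G$ with a map $C:E(G)\to\mathbb{N}$. $e(G)=|E(G)|$, $c(G)$ is the number of distinct colors appearing on $E(G)$. A subgraph is rainbow if all its edges have distinct colors, monochromatic if all its edges have the same color. For disjoint $S,S'\subseteq V(G)$, $G[S,S']$ is the bipartite subgraph with classes $S,S'$ and all edges of $G$ between $S$ and $S'$. The family $\mathcal{G}_0$ of edge-colored complete graphs is defined recursively: $K_1\in\mathcal{G}_0$; an edge-colored complete graph $G$ of order $n\ge 2$ belongs to $\mathcal{G}_0$ iff $c(G)=n-1$ and there is a partition $V(G)=V_1\cup V_2$ into nonempty sets such that $G[V_1,V_2]$ is monochromatic and $G[V_i]\in\mathcal{G}_0$ for $i=1,2$. *)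

From mathcomp Require Import all_boot.
Set Implicit Arguments. Unset Strict Implicit. Unset Printing Implicit Defensive.

(* An edge-colored finite simple graph on vertex type V: a symmetric irreflexive
   adjacency relation [adj] and a color map [col] (color of edge xy is col x y;
   col is required to be symmetric; its values on non-edges are irrelevant). *)
Definition simple_graph (V : finType) (adj : rel V) :=
  symmetric adj /\ irreflexive adj.

Definition sym_coloring (V : finType) (col : V -> V -> nat) :=
  forall x y, col x y = col y x.

Definition num_edges (V : finType) (adj : rel V) : nat :=
  #|[set [set p.1; p.2] | p in [set p : V * V | adj p.1 p.2]]|.

Definition colors_in (V : finType) (adj : rel V) (col : V -> V -> nat)
    (S : {set V}) : seq nat :=
  undup [seq col x y | x <- enum S, y <- [seq y <- enum S | adj x y]].

Definition num_colors (V : finType) (adj : rel V) (col : V -> V -> nat) : nat :=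
  size (colors_in adj col [set: V]).

Definition has_rainbow_triangle (V : finType) (adj : rel V)
    (col : V -> V -> nat) : Prop :=
  exists x y z : V, [/\ adj x y, adj y z & adj x z] /\
    [/\ col x y != col y z, col y z != col x z & col x y != col x z].

Definition complete_on (V : finType) (adj : rel V) (S : {set V}) : Prop :=
  forall x y, x \in S -> y \in S -> x != y -> adj x y.

Inductive inG0 (V : finType) (adj : rel V) (col : V -> V -> nat) :
    {set V} -> Prop :=
  | G0_single : forall S : {set V}, #|S| = 1 -> inG0 adj col S
  | G0_split : forall S S1 S2 : {set V},
      2 <= #|S| ->
      complete_on adj S ->
      size (colors_in adj col S) = #|S| - 1 ->
      S1 != set0 -> S2 != set0 -> [disjoint S1 & S2] -> S1 :|: S2 = S ->
      (exists c, forall x y, x \in S1 -> y \in S2 -> col x y = c) ->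
      inG0 adj col S1 -> inG0 adj col S2 ->
      inG0 adj col S.

Definition in_G0 (V : finType) (adj : rel V) (col : V -> V -> nat) : Prop :=
  complete_on adj [set: V] /\ inG0 adj col [set: V].

(* A colour of G[S] that disappears when v is deleted is private to v: it occurs only on
   edges at v, and as there is no rainbow triangle, neighbours of v reached through
   distinct private colours are pairwise non-adjacent.  Hence a vertex v of minimum
   degree has deg v + #private(v) <= |S|, and deleting it shows by induction that
   e(S) + c(S) <= C(|S|+1, 2) - 1, with equality only if S is complete: once S - v is
   complete, v has at most one private colour, so equality forces v to see all of S - v.
   A complete S with c(S) = |S| - 1 splits into two parts joined in a single colour:
   split S - v by induction; either v joins one of the parts, or v sees exactly two
   colours b and d with d private to v, and the b-neighbours of v form one part.  As
   c(S) <= c(S1) + c(S2) + 1 and c(Si) <= |Si| - 1, both parts are again extremal, which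
   is the recursion defining G_0. *)

From mathcomp Require Import all_boot zify.
Set Implicit Arguments. Unset Strict Implicit. Unset Printing Implicit Defensive.

Section NoRainbowTriangle.
Variables (V : finType) (adj : rel V) (col : V -> V -> nat).
Hypotheses (adj_sym : symmetric adj) (adj_irr : irreflexive adj).
Hypothesis col_sym : sym_coloring col.
Hypothesis no_rainbow : ~ has_rainbow_triangle adj col.

Local Notation colors := (colors_in adj col).

Lemma nonempty_set_ind (P : {set V} -> Prop) :
    (forall x, P [set x]) ->
    (forall S : {set V}, 1 < #|S| -> (forall v, v \in S -> P (S :\ v)) -> P S) ->
  forall S : {set V}, S != set0 -> P S.
Proof.
move=> P1 PS S; have [n] := ubnP #|S|; elim: n S => // n IH S ltSn nS.
have S_gt0 : 0 < #|S| by rewrite card_gt0.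
case: (boolP (#|S| == 1)) => [/cards1P[x ->] // | S_ne1].
have S_gt1 : 1 < #|S| by lia.
apply: PS => // u uS; apply: IH; first by rewrite (cardsD1 u) uS in ltSn.
by rewrite -card_gt0; move: S_gt1; rewrite (cardsD1 u) uS.
Qed.

Lemma complete_onS (S T : {set V}) :
  T \subset S -> complete_on adj S -> complete_on adj T.
Proof. by move=> sTS cS x y /(subsetP sTS) xS /(subsetP sTS); apply: cS. Qed.

Lemma complete_adj_setD1 v (S : {set V}) y :
  v \in S -> complete_on adj S -> y \in S :\ v -> adj v y.
Proof. by move=> vS cS /setD1P[yv yS]; apply: cS; rewrite // eq_sym. Qed.

Lemma adj_setD1 v (S : {set V}) y : y \in S -> adj v y -> y \in S :\ v.
Proof.
by move=> yS avy; rewrite !inE yS andbT; apply: contraTneq avy => ->; rewrite adj_irr.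
Qed.

Lemma complete_on_setD1 v (S : {set V}) :
    v \in S -> complete_on adj (S :\ v) -> {in S :\ v, forall y, adj v y} ->
  complete_on adj S.
Proof.
move=> vS cS' av x y xS yS.
have [-> | xv] := eqVneq x v; first by move=> vy; apply: av; rewrite !inE eq_sym vy.
have [-> | yv] := eqVneq y v; first by rewrite adj_sym => _; apply: av; rewrite !inE xv.
by apply: cS'; rewrite !inE ?xv ?yv.
Qed.

Lemma no_rainbow_third x y z :
    adj x y -> adj x z -> adj y z -> col x y != col x z ->
  col y z = col x y \/ col y z = col x z.
Proof.
move=> axy axz ayz nxyz.
case: (eqVneq (col y z) (col x y)) => [|n1]; first by left.
case: (eqVneq (col y z) (col x z)) => [|n2]; first by right.
by case: no_rainbow; exists x, y, z; rewrite eq_sym n1.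
Qed.

Lemma colorsP (S : {set V}) c :
  reflect (exists x y, [/\ x \in S, y \in S, adj x y & col x y = c])
          (c \in colors S).
Proof.
rewrite mem_undup; apply: (iffP allpairsPdep).
  move=> [x [y [xS + ->]]]; rewrite mem_filter mem_enum => /andP[axy yS].
  by exists x, y; rewrite -mem_enum.
move=> [x [y [xS yS axy <-]]]; exists x, y.
split=> //; first by rewrite mem_enum.
by rewrite mem_filter axy mem_enum.
Qed.

Lemma uniq_colors (S : {set V}) : uniq (colors S).
Proof. exact: undup_uniq. Qed.

Lemma colors_set1 x : colors [set x] = [::].
Proof.
case E: (colors [set x]) => [//|c s].
have /colorsP[a [b [+ + + _]]] : c \in colors [set x] by rewrite E mem_head.
by rewrite !inE => /eqP-> /eqP->; rewrite adj_irr.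
Qed.

Definition private_colors v (S : {set V}) :=
  [seq c <- colors S | c \notin colors (S :\ v)].

Lemma uniq_private_colors v (S : {set V}) : uniq (private_colors v S).
Proof. exact/filter_uniq/uniq_colors. Qed.

Lemma size_colors_setD1 v (S : {set V}) :
  size (colors S) <= size (colors (S :\ v)) + size (private_colors v S).
Proof.
rewrite -(count_predC (mem (colors (S :\ v))) (colors S)) size_filter leq_add2r.
rewrite -size_filter; apply: uniq_leq_size; first exact/filter_uniq/uniq_colors.
by move=> c; rewrite mem_filter => /andP[].
Qed.

Lemma private_color_edge v (S : {set V}) x y :
  col x y \in private_colors v S -> x \in S -> y \in S -> adj x y -> x = v \/ y = v.
Proof.
rewrite mem_filter => /andP[+ _] xS yS axy.
have [-> | xv] := eqVneq x v; first by left.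
have [-> | yv] := eqVneq y v; first by right.
by case/colorsP; exists x, y; rewrite !inE xv yv.
Qed.

Lemma private_colorP v (S : {set V}) c :
  c \in private_colors v S -> exists y, [/\ y \in S, adj v y & col v y = c].
Proof.
move=> cU; have /colorsP[x [y [xS yS axy exy]]] : c \in colors S.
  by move: cU; rewrite mem_filter => /andP[].
rewrite -exy in cU; case: (private_color_edge cU xS yS axy) => <-.
  by exists y.
by exists x; rewrite adj_sym col_sym.
Qed.

Lemma private_neighbors_nonadj v (S : {set V}) y1 y2 :
    col v y1 \in private_colors v S -> col v y2 \in private_colors v S ->
    col v y1 != col v y2 -> y1 \in S -> y2 \in S -> adj v y1 -> adj v y2 ->
  ~~ adj y1 y2.
Proof.
move=> p1 p2 n12 y1S y2S a1 a2; apply/negP => a12.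
have p12 : col y1 y2 \notin private_colors v S.
  by apply/negP => /private_color_edge/(_ y1S y2S a12) [] eqv;
    [move: a1 | move: a2]; rewrite -eqv adj_irr.
by case: (no_rainbow_third a1 a2 a12 n12) => e; rewrite e ?p1 ?p2 in p12.
Qed.

Lemma size_private_colors_le1 v (S : {set V}) :
  complete_on adj (S :\ v) -> size (private_colors v S) <= 1.
Proof.
move=> cS; case E: (private_colors v S) => [|c1 [|c2 s]] //.
have p1 : c1 \in private_colors v S by rewrite E mem_head.
have p2 : c2 \in private_colors v S by rewrite E !inE eqxx orbT.
have := uniq_private_colors v S; rewrite E /= inE negb_or -andbA => /and3P[n12 _ _].
have [y1 [y1S a1 e1]] := private_colorP p1.
have [y2 [y2S a2 e2]] := private_colorP p2.
rewrite -e1 -e2 in p1 p2 n12.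
have /negP[] := private_neighbors_nonadj p1 p2 n12 y1S y2S a1 a2.
apply: cS; [exact: adj_setD1 y1S a1 | exact: adj_setD1 y2S a2 |].
by apply: contraNneq n12 => ->.
Qed.

Lemma complete_colors_lt (S : {set V}) :
  S != set0 -> complete_on adj S -> size (colors S) < #|S|.
Proof.
move: S; apply: nonempty_set_ind => [x _|S S_gt1 IH cS]; first by rewrite colors_set1 cards1.
have [v vS] : exists v, v \in S by apply/set0Pn; rewrite -card_gt0 ltnW.
have cS' : complete_on adj (S :\ v) by apply: complete_onS cS; apply: subsetDl.
have := IH v vS cS'; have := size_colors_setD1 v S.
have := size_private_colors_le1 cS'; rewrite (cardsD1 v S) vS; lia.
Qed.

Definition edges_in (S : {set V}) :=
  [set [set p.1; p.2] | p in [set p : V * V | [&& p.1 \in S, p.2 \in S & adj p.1 p.2]]].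

Definition degree_in v (S : {set V}) := #|[set y in S | adj v y]|.

Lemma num_edges_setT : num_edges adj = #|edges_in [set: V]|.
Proof.
rewrite /edges_in.
suff -> : [set p : V * V | [&& p.1 \in [set: V], p.2 \in [set: V] & adj p.1 p.2]]
  = [set p | adj p.1 p.2] by [].
by apply/setP => p; rewrite !inE.
Qed.

Lemma card_edges_in_le (S : {set V}) : #|edges_in S| <= 'C(#|S|, 2).
Proof.
rewrite -cards_draws; apply/subset_leq_card/subsetP => A /imsetP[[x y]].
rewrite !inE /= => /and3P[xS yS axy] {A}->.
have xy : x != y by apply: contraTneq axy => ->; rewrite adj_irr.
by rewrite cards2 xy eqxx andbT; apply/subsetP => z /set2P[] ->.
Qed.

Lemma edges_in_setD1 v (S : {set V}) :
  edges_in S \subset edges_in (S :\ v) :|: [set [set v; y] | y in [set y in S | adj v y]].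
Proof.
apply/subsetP => A /imsetP[[x y]]; rewrite inE /= => /and3P[xS yS axy] {A}->.
have [<- | xv] := eqVneq x v.
  by apply/setUP; right; apply/imsetP; exists y; rewrite // inE yS axy.
have [<- | yv] := eqVneq y v.
  by apply/setUP; right; apply/imsetP; exists x; rewrite 1?setUC // inE xS adj_sym.
by apply/setUP; left; apply/imsetP; exists (x, y); rewrite // !inE /= xv yv xS yS axy.
Qed.

Lemma card_edges_in_setD1 v (S : {set V}) :
  #|edges_in S| <= #|edges_in (S :\ v)| + degree_in v S.
Proof.
apply: leq_trans (subset_leq_card (edges_in_setD1 v S)) _.
apply: leq_trans (leq_card_setU _ _).1 _.
by rewrite leq_add2l leq_imset_card.
Qed.

Lemma sub_neighbors_setD1 v (S : {set V}) : [set y in S | adj v y] \subset S :\ v.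
Proof.
by apply/subsetP => y; rewrite inE => /andP[]; apply: adj_setD1.
Qed.

Lemma degree_in_le v (S : {set V}) : degree_in v S <= #|S :\ v|.
Proof. exact/subset_leq_card/sub_neighbors_setD1. Qed.

Lemma degree_in_full v (S : {set V}) :
  #|S :\ v| <= degree_in v S -> {in S :\ v, forall y, adj v y}.
Proof.
move=> le_deg; have eq_card : #|[set y in S | adj v y]| = #|S :\ v|.
  by apply/eqP; rewrite eqn_leq le_deg degree_in_le.
have /(subset_cardP eq_card) E := sub_neighbors_setD1 v S.
by move=> y; rewrite -E inE => /andP[].
Qed.

Lemma degree_private_colors_le v y (S : {set V}) :
    y \in S -> adj v y -> col v y \in private_colors v S ->
  degree_in y S + size (private_colors v S) <= #|S|.
Proof.
move=> yS avy py.
pose R := [set z in S | [&& adj v z, col v z \in private_colors v S & col v z != col v y]].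
have le_R : size (private_colors v S) <= #|R|.+1.
  have sub : {subset private_colors v S <= col v y :: map (col v) (enum R)}.
    move=> c pc; rewrite inE; have [// | ncy] := eqVneq c (col v y).
    have [z [zS avz ezc]] := private_colorP pc.
    by apply/mapP; exists z; rewrite // mem_enum inE zS avz ezc pc ncy.
  have := uniq_leq_size (uniq_private_colors v S) sub.
  by rewrite /= size_map -cardE.
have disj : [disjoint [set z in S | adj y z] & y |: R].
  apply/pred0P => z /=; rewrite !inE.
  have [-> | _] /= := eqVneq z y; first by rewrite adj_irr andbF.
  apply/negP => /andP[/andP[zS ayz] /and4P[_ avz pz nzy]].
  have nyz : col v y != col v z by rewrite eq_sym.
  by rewrite (negbTE (private_neighbors_nonadj py pz nyz yS zS avy avz)) in ayz.
have sub : [set z in S | adj y z] :|: (y |: R) \subset S.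
  by apply/subsetP => z; rewrite !inE => /or3P[/andP[] | /eqP-> | /andP[]].
have := subset_leq_card sub; rewrite cardsU (disjoint_setI0 disj) cards0 subn0.
rewrite cardsU1 (_ : y \notin R) /degree_in; first lia.
by rewrite !inE eqxx /= !andbF.
Qed.

Lemma min_degree_private_colors_le v (S : {set V}) :
    v \in S -> {in S, forall u, degree_in v S <= degree_in u S} ->
  degree_in v S + size (private_colors v S) <= #|S|.
Proof.
move=> vS vmin; case E: (private_colors v S) => [|c s].
  by have := degree_in_le v S; rewrite (cardsD1 v S) vS /=; lia.
have pc : c \in private_colors v S by rewrite E mem_head.
have [y [yS avy eyc]] := private_colorP pc.
rewrite -E; apply: leq_trans (degree_private_colors_le yS avy _); last by rewrite eyc.
by rewrite leq_add2r vmin.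
Qed.

Lemma remove_min_degree_vertex (S : {set V}) :
  S != set0 -> exists v, [/\ v \in S,
    #|edges_in S| + size (colors S) <=
      #|edges_in (S :\ v)| + size (colors (S :\ v))
        + (degree_in v S + size (private_colors v S))
    & degree_in v S + size (private_colors v S) <= #|S|].
Proof.
case/set0Pn => v0 v0S; have [v vS vmin] := arg_minnP (fun u => degree_in u S) v0S.
exists v; split => //; last exact: min_degree_private_colors_le.
by have := card_edges_in_setD1 v S; have := size_colors_setD1 v S; lia.
Qed.

Lemma edges_colors_lt (S : {set V}) :
  S != set0 -> #|edges_in S| + size (colors S) < 'C(#|S|.+1, 2).
Proof.
move: S; apply: nonempty_set_ind => [x | S S_gt1 IH].
  by have := card_edges_in_le [set x]; rewrite colors_set1 cards1 bin_small // binn /=; lia.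
have nS : S != set0 by rewrite -card_gt0 ltnW.
have [v [vS le_ec le_k]] := remove_min_degree_vertex nS.
rewrite (cardsD1 v S) vS add1n binS bin1 in le_k *; have := IH v vS; lia.
Qed.

Lemma extremal_complete (S : {set V}) :
    S != set0 -> 'C(#|S|.+1, 2) <= (#|edges_in S| + size (colors S)).+1 ->
  complete_on adj S.
Proof.
move: S; apply: nonempty_set_ind => [x _ | S S_gt1 IH ext].
  by move=> y z /set1P-> /set1P->; rewrite eqxx.
have nS : S != set0 by rewrite -card_gt0 ltnW.
have [v [vS le_ec le_k]] := remove_min_degree_vertex nS.
have nS' : S :\ v != set0 by rewrite -card_gt0; move: S_gt1; rewrite (cardsD1 v) vS.
have lt' := edges_colors_lt nS'; have le_deg := degree_in_le v S.
rewrite (cardsD1 v S) vS add1n binS bin1 in ext le_k.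
have cS' : complete_on adj (S :\ v) by apply: IH => //; lia.
have le1 := size_private_colors_le1 cS'.
by apply: complete_on_setD1 vS cS' (degree_in_full _); lia.
Qed.

Definition mono_split (S S1 S2 : {set V}) c :=
  [/\ S1 != set0, S2 != set0, [disjoint S1 & S2], S1 :|: S2 = S &
      {in S1 & S2, forall x y, col x y = c}].

Lemma mono_split_sym (S S1 S2 : {set V}) c :
  mono_split S S1 S2 c -> mono_split S S2 S1 c.
Proof.
case=> n1 n2 d12 U12 c12; split; rewrite 1?disjoint_sym 1?setUC //.
by move=> x y xS2 yS1; rewrite col_sym c12.
Qed.

Lemma card_mono_split (S S1 S2 : {set V}) c :
  mono_split S S1 S2 c -> #|S| = #|S1| + #|S2|.
Proof. by case=> _ _ d12 <- _; rewrite cardsU (disjoint_setI0 d12) cards0 subn0. Qed.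

Lemma mono_split_color_in (S S1 S2 : {set V}) c :
  complete_on adj S -> mono_split S S1 S2 c -> c \in colors S.
Proof.
move=> cS [/set0Pn[x xS1] /set0Pn[y yS2] d12 U12 c12]; apply/colorsP.
have [xS yS] : x \in S /\ y \in S by rewrite -U12 !inE xS1 yS2 orbT.
exists x, y; split; rewrite ?c12 //; apply: cS => //.
by apply: contraTneq yS2 => <-; rewrite (disjointFr d12 xS1).
Qed.

Lemma size_colors_mono_split (S S1 S2 : {set V}) c :
  mono_split S S1 S2 c -> size (colors S) <= size (colors S1) + size (colors S2) + 1.
Proof.
case=> _ _ _ U12 c12.
have sub : {subset colors S <= colors S1 ++ colors S2 ++ [:: c]}.
  move=> _ /colorsP[x [y [xS yS axy <-]]]; rewrite !mem_cat inE.
  move: xS yS; rewrite -U12 => /setUP[xS1 | xS2] /setUP[yS1 | yS2].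
  - by apply/orP; left; apply/colorsP; exists x, y.
  - by rewrite c12 ?eqxx ?orbT.
  - by rewrite col_sym c12 ?eqxx ?orbT.
  - by apply/orP; right; apply/orP; left; apply/colorsP; exists x, y.
by have := uniq_leq_size (uniq_colors S) sub; rewrite !size_cat /=; lia.
Qed.

Lemma mono_split_set1 v (S : {set V}) c :
    v \in S -> S :\ v != set0 -> {in S :\ v, forall y, col v y = c} ->
  mono_split S [set v] (S :\ v) c.
Proof.
move=> vS nS' cv; split=> //; last by move=> x y /set1P->; apply: cv.
- by apply/set0Pn; exists v; rewrite inE.
- by rewrite disjoints1 !inE eqxx.
- exact: setD1K.
Qed.

Lemma mono_split_setU1 v (S T1 T2 : {set V}) c :
    v \in S -> mono_split (S :\ v) T1 T2 c -> {in T2, forall y, col v y = c} ->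
  mono_split S (v |: T1) T2 c.
Proof.
move=> vS [n1 n2 d12 U12 c12] cv.
have vT2 : v \notin T2 by apply/negP => /(subsetP (subsetUr T1 T2)); rewrite U12 setD11.
split=> //.
- by apply/set0Pn; exists v; rewrite setU11.
- apply/pred0P => x /=; rewrite !inE.
  have [-> | _] /= := eqVneq x v; first exact: negbTE.
  by apply/negP => /andP[/(disjointFr d12)->].
- by rewrite -[RHS](setD1K vS) -U12 setUA.
- by move=> x y /setU1P[-> | xT1] yT2; [exact: cv | exact: c12].
Qed.

Lemma mono_split_col_across v (S T1 T2 : {set V}) b x y :
    v \in S -> complete_on adj S -> mono_split (S :\ v) T1 T2 b ->
    x \in T1 -> y \in T2 -> col v x != b ->
  col v y = b \/ col v y = col v x.
Proof.
move=> vS cS [_ _ d12 U12 c12] xT1 yT2 nb.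
have [xS' yS'] : x \in S :\ v /\ y \in S :\ v by rewrite -U12 !inE xT1 yT2 orbT.
have [xS yS] : x \in S /\ y \in S by move: xS' yS'; rewrite !inE => /andP[_ ->] /andP[_ ->].
have xy : x != y by apply: contraTneq yT2 => <-; rewrite (disjointFr d12 xT1).
have axv : adj x v by rewrite adj_sym; apply: complete_adj_setD1 vS cS xS'.
have := no_rainbow_third axv (cS x y xS yS xy) (complete_adj_setD1 vS cS yS').
by rewrite (col_sym x v) (c12 x y) // => /(_ nb) [] ->; [right | left].
Qed.

Lemma two_colors_private v (S : {set V}) b d :
    v \in S -> size (colors (S :\ v)) < size (colors S) -> b \in colors (S :\ v) ->
    {in S :\ v, forall y, col v y = b \/ col v y = d} ->
  d \notin colors (S :\ v).
Proof.
move=> vS ltc bS' cv.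
have : 0 < size (private_colors v S) by have := size_colors_setD1 v S; lia.
case E: (private_colors v S) => [//|c s] _.
have pc : c \in private_colors v S by rewrite E mem_head.
have [y [yS avy ec]] := private_colorP pc.
move: pc; rewrite mem_filter -ec => /andP[+ _].
by case: (cv y (adj_setD1 yS avy)) => ->; rewrite ?bS'.
Qed.

Lemma two_colors_mono_split v (S : {set V}) b d :
    v \in S -> complete_on adj S -> S :\ v != set0 -> d \notin colors (S :\ v) ->
    {in S :\ v, forall y, col v y = b \/ col v y = d} ->
  exists S1 S2 c, mono_split S S1 S2 c.
Proof.
move=> vS cS nS' dS' cv.
pose A := [set y in S :\ v | col v y != b].
pose B := [set y in S :\ v | col v y == b].
have [B0 | nB] := eqVneq B set0.
  exists [set v], (S :\ v), d; apply: mono_split_set1 => // y yS'.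
  case: (cv y yS') => // eb; have : y \in B by rewrite inE yS' eb eqxx.
  by rewrite B0 inE.
have [A0 | nA] := eqVneq A set0.
  exists [set v], (S :\ v), b; apply: mono_split_set1 => // y yS'.
  apply/eqP/negPn/negP => nb; have : y \in A by rewrite inE yS' nb.
  by rewrite A0 inE.
have sAB : mono_split (S :\ v) A B b.
  split=> //.
  - by apply/pred0P => y /=; rewrite !inE; case: (col v y == b); rewrite ?andbF.
  - by apply/setP => y; rewrite !inE; case: (col v y == b); rewrite ?andbT ?andbF ?orbF.
  move=> x y /setIdP[xS' nxb] /setIdP[yS' /eqP eyb].
  have exd : col v x = d by case: (cv x xS') => // exb; rewrite exb eqxx in nxb.
  have xy : x != y by apply: contraNneq nxb => ->; rewrite eyb.
  have axy := complete_onS (subsetDl S [set v]) cS xS' yS' xy.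
  have := no_rainbow_third (complete_adj_setD1 vS cS xS') (complete_adj_setD1 vS cS yS') axy.
  rewrite eyb => /(_ nxb) [] // exy.
  by case/negP: dS'; apply/colorsP; exists x, y; rewrite exy exd.
exists (v |: A), B, b; apply: mono_split_setU1 => // y.
by rewrite inE => /andP[_ /eqP].
Qed.

Lemma mono_split_extend v (S T1 T2 : {set V}) b :
    v \in S -> complete_on adj S -> size (colors (S :\ v)) < size (colors S) ->
    mono_split (S :\ v) T1 T2 b ->
  exists S1 S2 c, mono_split S S1 S2 c.
Proof.
move=> vS cS ltc sT.
have [/forall_inP cT2 | /forall_inPn[t2 t2T2 nt2]] := boolP [forall y in T2, col v y == b].
  by exists (v |: T1), T2, b; apply: mono_split_setU1 => // y /cT2/eqP.
have sT' := mono_split_sym sT.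
have [/forall_inP cT1 | /forall_inPn[t1 t1T1 nt1]] := boolP [forall y in T1, col v y == b].
  by exists (v |: T2), T1, b; apply: mono_split_setU1 => // y /cT1/eqP.
have e21 : col v t2 = col v t1.
  by case: (mono_split_col_across vS cS sT t1T1 t2T2 nt1) => // e; rewrite e eqxx in nt2.
have cv : {in S :\ v, forall y, col v y = b \/ col v y = col v t1}.
  move=> y; case: (sT) => _ _ _ <- _ /setUP[yT1 | yT2].
    by rewrite -e21; apply: mono_split_col_across sT' t2T2 yT1 nt2.
  exact: mono_split_col_across sT t1T1 yT2 nt1.
have bS' := mono_split_color_in (complete_onS (subsetDl S [set v]) cS) sT.
have nS' : S :\ v != set0 by case: sT => _ _ _ <- _; apply/set0Pn; exists t1; rewrite inE t1T1.
exact: two_colors_mono_split vS cS nS' (two_colors_private vS ltc bS' cv) cv.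
Qed.

Lemma complete_mono_split (S : {set V}) :
    1 < #|S| -> complete_on adj S -> #|S| - 1 <= size (colors S) ->
  exists S1 S2 c, mono_split S S1 S2 c.
Proof.
move=> S_gt1; have nS : S != set0 by rewrite -card_gt0 ltnW.
move: S nS S_gt1; apply: nonempty_set_ind => [x | S _ IH S_gt1 cS cS_ge].
  by rewrite cards1.
have [v vS] : exists v, v \in S by apply/set0Pn; rewrite -card_gt0 ltnW.
have cS' : complete_on adj (S :\ v) by apply: complete_onS cS; apply: subsetDl.
have cardS : #|S| = #|S :\ v|.+1 by rewrite (cardsD1 v) vS.
have nS' : S :\ v != set0 by rewrite -card_gt0; lia.
have ltc : size (colors (S :\ v)) < size (colors S).
  by have := complete_colors_lt nS' cS'; lia.
have [S'_gt1 | ] := ltnP 1 #|S :\ v|.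
  have := size_colors_setD1 v S; have := size_private_colors_le1 cS' => le1 leS.
  have [|T1 [T2 [b sT]]] := IH v vS S'_gt1 cS'; first lia.
  exact: mono_split_extend vS cS ltc sT.
move=> S'_le1; have /cards1P[w Ew] : #|S :\ v| == 1 by rewrite eqn_leq S'_le1 card_gt0.
by exists [set v], (S :\ v), (col v w); apply: mono_split_set1 => // y; rewrite Ew => /set1P->.
Qed.

Lemma complete_inG0 (S : {set V}) :
    S != set0 -> complete_on adj S -> #|S| - 1 <= size (colors S) ->
  inG0 adj col S.
Proof.
have [n] := ubnP #|S|; elim: n S => // n IH S ltSn nS cS cS_ge.
have S_gt0 : 0 < #|S| by rewrite card_gt0.
have [/eqP S1 | S_ne1] := boolP (#|S| == 1); first exact: G0_single.
have S_gt1 : 1 < #|S| by lia.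
have [S1 [S2 [c sS]]] := complete_mono_split S_gt1 cS cS_ge.
have cardS := card_mono_split sS; have le12 := size_colors_mono_split sS.
have ltS := complete_colors_lt nS cS.
case: sS => nS1 nS2 d12 U12 c12.
have cS1 : complete_on adj S1 by apply: complete_onS cS; rewrite -U12 subsetUl.
have cS2 : complete_on adj S2 by apply: complete_onS cS; rewrite -U12 subsetUr.
have lt1 := complete_colors_lt nS1 cS1; have lt2 := complete_colors_lt nS2 cS2.
have S1_gt0 : 0 < #|S1| by rewrite card_gt0.
have S2_gt0 : 0 < #|S2| by rewrite card_gt0.
apply: (@G0_split _ _ _ S S1 S2) => //; [lia | by exists c | |]; apply: IH => //; lia.
Qed.

End NoRainbowTriangle.

Theorem theorem2 (V : finType) (adj : rel V) (col : V -> V -> nat) :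
  simple_graph adj -> sym_coloring col ->
  1 <= #|V| ->
  'C(#|V|.+1, 2) - 1 <= num_edges adj + num_colors adj col ->
  ~ has_rainbow_triangle adj col ->
  in_G0 adj col.
Proof.
move=> [adj_sym adj_irr] col_sym V_gt0 ec_ge no_rainbow.
have nT : [set: V] != set0 by rewrite -card_gt0 cardsT.
rewrite num_edges_setT /num_colors -cardsT in ec_ge.
have cT : complete_on adj [set: V].
  by apply: extremal_complete adj_sym adj_irr col_sym no_rainbow _ nT _; lia.
split=> //; apply: complete_inG0 => //.
by have := card_edges_in_le adj_irr [set: V]; move: ec_ge; rewrite binS bin1; lia.
Qed.
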